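(* Let $(T,\eta,(-)^\#,\sqsubseteq,\Uparrow)$ be a while-monad on $\mathbf{Set}$, $(\Omega,\le)$ a complete lattice and $o:T\Omega\to\Omega$ a meet-preserving Eilenberg–Moore $T$-algebra with $o(\bigsqcup_i c_i)=\bigwedge_i o(c_i)$ for every $\omega$-chain $(c_i)$ in $(T\Omega,\sqsubseteq_\Omega)$ and $o(\Uparrow_\Omega)=\top$. Let $(A,\le_A)$ be a complete lattice (with binary meets $\wedge_A$, joins $\vee_A$) and $\alpha:\mathcal P_\Omega(\mathbb M)\to A$, $\gamma:A\to\mathcal P_\Omega(\mathbb M)$ a Galois connection $\alpha\dashv\gamma$. Define $\llbracket-\rrbracket^\sharp$ on while programs by induction: $\llbracket\mathtt{skip}\rrbracket^\sharp=\mathrm{id}_A$, $\llbracket P;P'\rrbracket^\sharp=\llbracket P'\rrbracket^\sharp\circ\llbracket P\rrbracket^\sharp$, $\llbracket x:=e\rrbracket^\sharp=\alpha\circ sp^o(\llbracket x:=e\rrbracket)\circ\gamma$, $\llbracket\mathtt{if}\ b\ \{P_1\}\ \mathtt{else}\ \{P_2\}\rrbracket^\sharp=\lambda\phi.\ \llbracket P_1\rrbracket^\sharp(\phi\wedge_A\alpha(\mathrm{grd}_b^{\mathrm{tt}}))\vee_A\llbracket P_2\rrbracket^\sharp(\phi\wedge_A\alpha(\mathrm{grd}_b^{\mathrm{ff}}))$, and $\llbracket\mathtt{while}\ b\ \{P\}\rrbracket^\sharp=\mu\Theta$, the least fixpoint in the complete lattice of monotone maps $A\to A$ (pointwise order)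 of $\Theta(f)=\lambda\phi.\ f(\llbracket P\rrbracket^\sharp(\phi\wedge_A\alpha(\mathrm{grd}_b^{\mathrm{tt}})))\vee_A(\phi\wedge_A\alpha(\mathrm{grd}_b^{\mathrm{ff}}))$. Then $\llbracket-\rrbracket^\sharp$ is a functor $L_w\to\mathbf{Pos}$ (sending the unique object to $A$), and for every program $P$, $\alpha\circ\llbracket P\rrbracket^c\circ\gamma\le\llbracket P\rrbracket^\sharp$ pointwise.
   Context: Fix a set of values $\mathbb V$, a finite set of variables $X$, and memories $\mathbb M=\mathbb V^X$. Programs: $P::=\mathtt{skip}\mid P;P\mid x:=e\mid \mathtt{if}\ b\ \{P\}\ \mathtt{else}\ \{P\}\mid \mathtt{while}\ b\ \{P\}$; $L_w$ is the one-object category whose morphisms are programs, with composition given by sequencing $;$ (taken associative) and identity $\mathtt{skip}$ (with $\mathtt{skip};P=P;\mathtt{skip}=P$). Each condition $b$ has a given interpretation $\llbracket b\rrbracket:\mathbb M\to\{\mathrm{ff},\mathrm{tt}\}$. A while-monad on $\mathbf{Set}$ is a monad $(T,\eta,(-)^\#)$ on $\mathbf{Set}$ together with an $\omega$-cpo structure $(\sqsubseteq_X,\Uparrow_X)$ (least element $\Uparrow_X$, sups $\bigsqcup$ of $\omega$-chains) on each $TX$, such that, with $\sqsubseteq_{X,Y}$ the pointwise order on Kleisli maps $\mathbf{Set}_T(X,Y)=\mathbf{Set}(X,TY)$ and $\Uparrow_{X,Y}=\lambda x.\Uparrow_Y$: Kleisli composition $g\bullet f=g^\#\circ f$ is monotone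 and $\omega$-continuous in each argument, and $f\bullet\Uparrow_{X,Y}=\Uparrow_{X,Z}$. Monadic semantics: each assignment has a given $\llbracket x:=e\rrbracket\in\mathbf{Set}_T(\mathbb M,\mathbb M)$, and $\llbracket\mathtt{skip}\rrbracket_T=\eta_{\mathbb M}$, $\llbracket P;P'\rrbracket_T=\llbracket P'\rrbracket_T\bullet\llbracket P\rrbracket_T$, $\llbracket x:=e\rrbracket_T=\llbracket x:=e\rrbracket$, $\llbracket\mathtt{if}\ b\ \{P_1\}\ \mathtt{else}\ \{P_2\}\rrbracket_T=\lambda\rho.$ if $\llbracket b\rrbracket\rho=\mathrm{tt}$ then $\llbracket P_1\rrbracket_T(\rho)$ else $\llbracket P_2\rrbracket_T(\rho)$, $\llbracket\mathtt{while}\ b\ \{P\}\rrbracket_T=\mu\Phi$ (least fixpoint w.r.t. $\sqsubseteq_{\mathbb M,\mathbb M}$) with $\Phi(f)=\lambda\rho.$ if $\llbracket b\rrbracket\rho=\mathrm{tt}$ then $(f\bullet\llbracket P\rrbracket_T)(\rho)$ else $\eta_{\mathbb M}(\rho)$. $\mathcal P_\Omega(Y)=(\mathbf{Set}(Y,\Omega),\le_Y)$ with pointwise order. An Eilenberg–Moore algebra $o$ is meet-preserving if each $\phi\mapsto o\circ T\phi:\mathcal P_\Omega(Y)\to\mathcal P_\Omega(TY)$ preserves arbitrary meets. For $f\in\mathbf{Set}_T(Y,Z)$, $wp^o(f)(\phi)=o\circ T\phi\circ f$ and $sp^o(f)$ is the left adjoint of $wp^o(f)$. The collecting semantics is $\llbracket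 P\rrbracket^c=sp^o(\llbracket P\rrbracket_T):\mathcal P_\Omega(\mathbb M)\to\mathcal P_\Omega(\mathbb M)$. $\mathrm{grd}_b^v\in\mathcal P_\Omega(\mathbb M)$: $\mathrm{grd}_b^v(\rho)=\top$ if $\llbracket b\rrbracket\rho=v$, else $\bot$. A Galois connection $\alpha\dashv\gamma$ means $\alpha(\phi)\le_A a\iff\phi\le\gamma(a)$. *)

From mathcomp Require Import all_boot.
Set Implicit Arguments. Unset Strict Implicit. Unset Printing Implicit Defensive.

Record complete_lattice := CompleteLattice {
  cl_car :> Type;
  cl_le : cl_car -> cl_car -> Prop;
  cl_inf : (cl_car -> Prop) -> cl_car;
  cl_le_refl : forall x, cl_le x x;
  cl_le_trans : forall x y z, cl_le x y -> cl_le y z -> cl_le x z;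
  cl_le_antisym : forall x y, cl_le x y -> cl_le y x -> x = y;
  cl_inf_lb : forall (S : cl_car -> Prop) x, S x -> cl_le (cl_inf S) x;
  cl_inf_glb : forall (S : cl_car -> Prop) y,
      (forall x, S x -> cl_le y x) -> cl_le y (cl_inf S)
}.

Section LatticeOps.
Variable L : complete_lattice.
Definition cl_sup (S : L -> Prop) : L :=
  cl_inf (fun u => forall x, S x -> cl_le x u).
Definition cl_top : L := cl_inf (fun _ => False).
Definition cl_bot : L := cl_inf (fun _ => True).
Definition cl_meet (x y : L) : L := cl_inf (fun z => z = x \/ z = y).
Definition cl_join (x y : L) : L := cl_sup (fun z => z = x \/ z = y).
Definition cl_monotone (f : L -> L) : Prop :=
  forall x y, cl_le x y -> cl_le (f x) (f y).
End LatticeOps.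

(* Omega-valued predicates P_Omega(Y) = Set(Y, Omega), pointwise order/meets *)
Definition ple (Om : complete_lattice) (Y : Type) (phi psi : Y -> Om) : Prop :=
  forall y, cl_le (phi y) (psi y).
Definition pinf (Om : complete_lattice) (Y : Type) (S : (Y -> Om) -> Prop)
  : Y -> Om := fun y => cl_inf (fun w => exists phi, S phi /\ w = phi y).

(* wbind f = f^# (Kleisli extension); Kleisli composition g • f is     *)
(* fun x => wbind g (f x); Kleisli maps are ordered pointwise.         *)
(* wsup is the sup of omega-chains (its value on non-chains is junk).  *)
Record while_monad := WhileMonad {
  wT :> Type -> Type;
  wret : forall X : Type, X -> wT X;
  wbind : forall X Y : Type, (X -> wT Y) -> wT X -> wT Y;
  wle : forall X : Type, wT X -> wT X -> Prop;
  wbot : forall X : Type, wT X;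
  wsup : forall X : Type, (nat -> wT X) -> wT X;
  wbind_ret_l : forall X Y (f : X -> wT Y) x, wbind f (wret x) = f x;
  wbind_ret_r : forall X (m : wT X), wbind (@wret X) m = m;
  wbind_assoc : forall X Y Z (f : X -> wT Y) (g : Y -> wT Z) (m : wT X),
      wbind g (wbind f m) = wbind (fun x => wbind g (f x)) m;
  wle_refl : forall X (t : wT X), wle t t;
  wle_trans : forall X (t u v : wT X), wle t u -> wle u v -> wle t v;
  wle_antisym : forall X (t u : wT X), wle t u -> wle u t -> t = u;
  wbot_least : forall X (t : wT X), wle (wbot X) t;
  wsup_ub : forall X (c : nat -> wT X), (forall n, wle (c n) (c n.+1)) ->
      forall n, wle (c n) (wsup c);
  wsup_least : forall X (c : nat -> wT X) (t : wT X),
      (forall n, wle (c n) (c n.+1)) -> (forall n, wle (c n) t) -> wle (wsup c) t;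
  wkl_mono_l : forall X Y Z (f : X -> wT Y) (g g' : Y -> wT Z),
      (forall y, wle (g y) (g' y)) -> forall x, wle (wbind g (f x)) (wbind g' (f x));
  wkl_mono_r : forall X Y Z (f f' : X -> wT Y) (g : Y -> wT Z),
      (forall x, wle (f x) (f' x)) -> forall x, wle (wbind g (f x)) (wbind g (f' x));
  wkl_cont_l : forall X Y Z (f : X -> wT Y) (gs : nat -> Y -> wT Z),
      (forall n y, wle (gs n y) (gs n.+1 y)) ->
      forall x, wbind (fun y => wsup (fun n => gs n y)) (f x)
                = wsup (fun n => wbind (gs n) (f x));
  wkl_cont_r : forall X Y Z (fs : nat -> X -> wT Y) (g : Y -> wT Z),
      (forall n x, wle (fs n x) (fs n.+1 x)) ->
      forall x, wbind g (wsup (fun n => fs n x))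
                = wsup (fun n => wbind g (fs n x));
  wkl_strict : forall X Y Z (f : Y -> wT Z) (x : X),
      wbind f ((fun _ : X => wbot Y) x) = wbot Z
}.

Arguments wret {w X}.
Arguments wbind {w X Y}.
Arguments wle {w X}.
Arguments wbot {w}.
Arguments wsup {w X}.

Definition fmap (W : while_monad) (X Y : Type) (f : X -> Y) : W X -> W Y :=
  wbind (fun x => wret (f x)).

Inductive prog (Var Expr BExpr : Type) : Type :=
  | Skip
  | Seq of prog Var Expr BExpr & prog Var Expr BExpr
  | Assign of Var & Expr
  | If of BExpr & prog Var Expr BExpr & prog Var Expr BExpr
  | While of BExpr & prog Var Expr BExpr.

Arguments Skip {Var Expr BExpr}.

Definition memory (V : Type) (Var : finType) : Type := Var -> V.

Definition klfp (W : while_monad) (Y Z : Type)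
  (Phi : (Y -> W Z) -> (Y -> W Z)) : Y -> W Z :=
  fun y => wsup (fun n => iter n Phi (fun _ => wbot Z) y).

Fixpoint csem (W : while_monad) (V : Type) (Var : finType) (Expr BExpr : Type)
  (asg : Var -> Expr -> memory V Var -> W (memory V Var))
  (bsem : BExpr -> memory V Var -> bool)
  (P : prog Var Expr BExpr) : memory V Var -> W (memory V Var) :=
  match P with
  | Skip => fun rho => wret rho
  | Seq P1 P2 => fun rho => wbind (csem asg bsem P2) (csem asg bsem P1 rho)
  | Assign x e => asg x e
  | If b P1 P2 => fun rho => if bsem b rho then csem asg bsem P1 rho
                             else csem asg bsem P2 rho
  | While b P1 => klfp (fun f rho => if bsem b rho
                                     then wbind f (csem asg bsem P1 rho)
                                     else wret rho)
  end.

Definition wp (W : while_monad) (Om : complete_lattice) (o : W Om -> Om)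
  (Y Z : Type) (f : Y -> W Z) (phi : Z -> Om) : Y -> Om :=
  fun y => o (fmap phi (f y)).

(* sp^o(f) = the left adjoint of wp^o(f), given by the standard formula
   sp(f)(psi) = /\ { phi | psi <= wp(f)(phi) } (pointwise meet). *)
Definition sp (W : while_monad) (Om : complete_lattice) (o : W Om -> Om)
  (Y Z : Type) (f : Y -> W Z) (psi : Y -> Om) : Z -> Om :=
  pinf (fun phi => ple psi (wp o f phi)).

Definition grd (Om : complete_lattice) (V : Type) (Var : finType) (BExpr : Type)
  (bsem : BExpr -> memory V Var -> bool) (b : BExpr) (v : bool) : memory V Var -> Om :=
  fun rho => if bsem b rho == v then cl_top Om else cl_bot Om.

Fixpoint asem (W : while_monad) (Om : complete_lattice) (o : W Om -> Om)
  (V : Type) (Var : finType) (Expr BExpr : Type)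
  (asg : Var -> Expr -> memory V Var -> W (memory V Var))
  (bsem : BExpr -> memory V Var -> bool)
  (A : complete_lattice) (alpha : (memory V Var -> Om) -> A)
  (gamma : A -> (memory V Var -> Om))
  (P : prog Var Expr BExpr) : A -> A :=
  let atrue b := alpha (grd Om bsem b true) in
  let afalse b := alpha (grd Om bsem b false) in
  match P with
  | Skip => fun a => a
  | Seq P1 P2 => fun a => asem o asg bsem alpha gamma P2
                            (asem o asg bsem alpha gamma P1 a)
  | Assign x e => fun a => alpha (sp o (asg x e) (gamma a))
  | If b P1 P2 => fun a =>
      cl_join (asem o asg bsem alpha gamma P1 (cl_meet a (atrue b)))
              (asem o asg bsem alpha gamma P2 (cl_meet a (afalse b)))
  | While b P1 =>
      let Theta (f : A -> A) : A -> A := fun a =>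
        cl_join (f (asem o asg bsem alpha gamma P1 (cl_meet a (atrue b))))
                (cl_meet a (afalse b)) in
      (* least fixpoint in the complete lattice of monotone maps A -> A
         (Knaster-Tarski: meet of all monotone pre-fixpoints; meets of
         monotone maps are computed pointwise) *)
      fun a => cl_inf (fun w => exists f : A -> A,
                 [/\ cl_monotone f, (forall a', cl_le (Theta f a') (f a')) & w = f a])
  end.

From mathcomp Require Import all_boot.
From Stdlib Require Import FunctionalExtensionality.
Set Implicit Arguments. Unset Strict Implicit.

(* The proof goes through the weakest-precondition transformer wp^o rather
   than its left adjoint sp^o. *)

Section LatticeFacts.
Variable L : complete_lattice.
Implicit Types x y z u : L.

Lemma meet_l x y : cl_le (cl_meet x y) x.
Proof. by apply: cl_inf_lb; left. Qed.

Lemma meet_r x y : cl_le (cl_meet x y) y.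
Proof. by apply: cl_inf_lb; right. Qed.

Lemma meet_glb x y z : cl_le z x -> cl_le z y -> cl_le z (cl_meet x y).
Proof. by move=> zx zy; apply: cl_inf_glb => w [->|->]. Qed.

Lemma join_l x y : cl_le x (cl_join x y).
Proof. by apply: cl_inf_glb => u; apply; left. Qed.

Lemma join_r x y : cl_le y (cl_join x y).
Proof. by apply: cl_inf_glb => u; apply; right. Qed.

Lemma join_lub x y u : cl_le x u -> cl_le y u -> cl_le (cl_join x y) u.
Proof. by move=> xu yu; apply: cl_inf_lb => z [->|->]. Qed.

Lemma bot_le x : cl_le (cl_bot L) x.
Proof. exact: cl_inf_lb. Qed.

Lemma le_top x : cl_le x (cl_top L).
Proof. exact: cl_inf_glb. Qed.

Lemma meet_le2l x x' y : cl_le x x' -> cl_le (cl_meet x y) (cl_meet x' y).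
Proof.
by move=> xx'; apply: meet_glb; [apply: cl_le_trans (meet_l _ _) xx' | apply: meet_r].
Qed.

Definition lfp_monotone (Th : (L -> L) -> L -> L) : L -> L :=
  fun a => cl_inf (fun w => exists f : L -> L,
    [/\ cl_monotone f, (forall a', cl_le (Th f a') (f a')) & w = f a]).

Lemma lfp_monotone_mono Th : cl_monotone (lfp_monotone Th).
Proof.
move=> x y xy; apply: cl_inf_glb => w [f [fmono fpre ->]].
by apply: cl_le_trans (fmono _ _ xy); apply: cl_inf_lb; exists f.
Qed.

(* For a monotone [Th], the lfp is itself a pre-fixpoint of [Th]; besides
   monotonicity, this is all that soundness needs of the abstract loop. *)
Lemma lfp_monotone_prefix (Th : (L -> L) -> L -> L) :
  (forall f g : L -> L, (forall x, cl_le (f x) (g x)) ->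
     forall x, cl_le (Th f x) (Th g x)) ->
  forall a, cl_le (Th (lfp_monotone Th) a) (lfp_monotone Th a).
Proof.
move=> Thmono a; apply: cl_inf_glb => w [f [fmono fpre ->]].
apply: cl_le_trans (fpre a); apply: Thmono => x.
by apply: cl_inf_lb; exists f.
Qed.

End LatticeFacts.

Section GaloisConnection.
Variables (Om A : complete_lattice) (Y : Type).
Variables (alpha : (Y -> Om) -> A) (gamma : A -> Y -> Om).
Hypothesis galois : forall phi a, cl_le (alpha phi) a <-> ple phi (gamma a).

Lemma galois_unit phi : ple phi (gamma (alpha phi)).
Proof. exact/galois/cl_le_refl. Qed.

Lemma alpha_mono phi phi' : ple phi phi' -> cl_le (alpha phi) (alpha phi').
Proof.
by move=> le_phi; apply/galois => y; apply: cl_le_trans (le_phi y) (galois_unit _ _).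
Qed.

Lemma gamma_mono a a' : cl_le a a' -> ple (gamma a) (gamma a').
Proof.
by move=> le_a; apply/galois; apply: cl_le_trans le_a; apply/galois => y; apply: cl_le_refl.
Qed.

End GaloisConnection.

Section PredicateTransformers.
Variables (W : while_monad) (Om : complete_lattice) (o : W Om -> Om).
Implicit Types (X Y Z : Type).

Lemma fmap_comp X Y Z (f : X -> Y) (g : Y -> Z) (m : W X) :
  fmap g (fmap f m) = fmap (fun x => g (f x)) m.
Proof.
rewrite /fmap wbind_assoc; congr wbind.
by apply: functional_extensionality => x; rewrite wbind_ret_l.
Qed.

Lemma wp_ret (o_unit : forall w, o (wret w) = w) Y (phi : Y -> Om) y :
  wp o (fun y => wret y) phi y = phi y.
Proof. by rewrite /wp /fmap wbind_ret_l o_unit. Qed.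

Lemma wp_kleisli (o_mult : forall m : W (W Om), o (wbind (fun t => t) m) = o (fmap o m))
  X Y Z (f : X -> W Y) (g : Y -> W Z) (phi : Z -> Om) x :
  wp o (fun x => wbind g (f x)) phi x = wp o f (wp o g phi) x.
Proof.
rewrite /wp.
have -> : fmap phi (wbind g (f x)) = wbind (fun y => fmap phi (g y)) (f x).
  by rewrite /fmap wbind_assoc.
rewrite -(fmap_comp (fun y => fmap phi (g y)) o) -o_mult /fmap wbind_assoc.
congr (o (wbind _ _)); apply: functional_extensionality => y.
by rewrite wbind_ret_l.
Qed.

Hypothesis o_meet : forall (Y : Type) (S : (Y -> Om) -> Prop) (t : W Y),
  o (fmap (pinf S) t) = cl_inf (fun w => exists phi, S phi /\ w = o (fmap phi t)).

(* Preserving binary meets, wp is monotone in the postcondition. *)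
Lemma wp_mono Y Z (f : Y -> W Z) (phi phi' : Z -> Om) :
  ple phi phi' -> ple (wp o f phi) (wp o f phi').
Proof.
move=> le_phi y.
have meet_phi : pinf (fun psi => psi = phi \/ psi = phi') = phi.
  apply: functional_extensionality => z; apply: cl_le_antisym.
    by apply: cl_inf_lb; exists phi; split; [left|].
  by apply: cl_inf_glb => w [psi [[->|->] ->]]; [apply: cl_le_refl | apply: le_phi].
rewrite /wp -{1}meet_phi o_meet; apply: cl_inf_lb.
by exists phi'; split; [right|].
Qed.

(* The unit of the adjunction: psi <= wp(f)(sp(f)(psi)), since wp(f)
   preserves the meet defining sp(f)(psi). *)
Lemma sp_unit Y Z (f : Y -> W Z) (psi : Y -> Om) : ple psi (wp o f (sp o f psi)).
Proof.
by move=> y; rewrite /wp /sp o_meet; apply: cl_inf_glb => w [phi [le_wp ->]].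
Qed.

Lemma sp_wp_adjoint Y Z (f : Y -> W Z) (psi : Y -> Om) (phi : Z -> Om) :
  ple (sp o f psi) phi <-> ple psi (wp o f phi).
Proof.
split => [le_sp y | le_wp y]; last by apply: cl_inf_lb; exists phi.
exact: cl_le_trans (sp_unit f psi y) (wp_mono f le_sp y).
Qed.

End PredicateTransformers.

Section KleeneIteration.
Variables (W : while_monad) (Y Z : Type).
Variable Phi : (Y -> W Z) -> Y -> W Z.
Hypothesis Phi_mono : forall f g : Y -> W Z,
  (forall y, wle (f y) (g y)) -> forall y, wle (Phi f y) (Phi g y).

Definition kleene_iter (n : nat) : Y -> W Z := iter n Phi (fun _ => wbot Z).

Lemma kleene_chain n y : wle (kleene_iter n y) (kleene_iter n.+1 y).
Proof.
elim: n y => [|n IHn] y; first exact: wbot_least.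
exact: Phi_mono.
Qed.

Lemma wp_klfp_lb (Om : complete_lattice) (o : W Om -> Om)
  (o_sup : forall c : nat -> W Om, (forall n, wle (c n) (c n.+1)) ->
     o (wsup c) = cl_inf (fun w => exists n, w = o (c n)))
  (psi : Y -> Om) (phi : Z -> Om) :
  (forall n, ple psi (wp o (kleene_iter n) phi)) -> ple psi (wp o (klfp Phi) phi).
Proof.
move=> le_iter y; rewrite /wp /klfp /fmap (wkl_cont_r _ kleene_chain) o_sup.
  by apply: cl_inf_glb => w [n ->]; apply: le_iter.
by move=> n; apply: wkl_mono_r => y'; apply: kleene_chain.
Qed.

End KleeneIteration.

Lemma wp_bot (W : while_monad) (Om : complete_lattice) (o : W Om -> Om)
  (o_bot : o (wbot Om) = cl_top Om) Y Z (phi : Z -> Om) (y : Y) :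
  wp o (fun _ => wbot Z) phi y = cl_top Om.
Proof. by rewrite /wp /fmap (@wkl_strict _ unit _ _ _ tt) o_bot. Qed.

Section AbstractSemantics.
Variables (W : while_monad) (Om : complete_lattice) (o : W Om -> Om).
Variables (V : Type) (Var : finType) (Expr BExpr : Type).
Variable asg : Var -> Expr -> memory V Var -> W (memory V Var).
Variable bsem : BExpr -> memory V Var -> bool.
Variables (A : complete_lattice) (alpha : (memory V Var -> Om) -> A).
Variable gamma : A -> memory V Var -> Om.
Hypothesis galois : forall phi a, cl_le (alpha phi) a <-> ple phi (gamma a).
Hypothesis o_meet : forall (Y : Type) (S : (Y -> Om) -> Prop) (t : W Y),
  o (fmap (pinf S) t) = cl_inf (fun w => exists phi, S phi /\ w = o (fmap phi t)).

Local Notation sharp := (asem o asg bsem alpha gamma).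
Local Notation csem := (csem asg bsem).

Definition restrict (b : BExpr) (v : bool) (a : A) : A :=
  cl_meet a (alpha (grd Om bsem b v)).

Definition while_step (b : BExpr) (body : A -> A) (f : A -> A) (a : A) : A :=
  cl_join (f (body (restrict b true a))) (restrict b false a).

Lemma sharp_While b P : sharp (While b P) = lfp_monotone (while_step b (sharp P)).
Proof. by []. Qed.

Lemma while_step_mono b body (f g : A -> A) :
  (forall x, cl_le (f x) (g x)) -> forall x, cl_le (while_step b body f x) (while_step b body g x).
Proof.
move=> le_fg x; apply: join_lub; last exact: join_r.
by apply: cl_le_trans (le_fg _) _; apply: join_l.
Qed.

Lemma sharp_mono P : cl_monotone (sharp P).
Proof.
elim: P => [|P1 IH1 P2 IH2|x e|b P1 IH1 P2 IH2|b P1 IH1] a a' le_a //=.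
- exact/IH2/IH1.
- apply/(alpha_mono galois)/(sp_wp_adjoint o_meet) => m.
  exact: cl_le_trans (gamma_mono galois le_a m) (sp_unit o_meet _ _ m).
- apply: join_lub.
    by apply: cl_le_trans _ (join_l _ _); apply/IH1/meet_le2l.
  by apply: cl_le_trans _ (join_r _ _); apply/IH2/meet_le2l.
- exact: lfp_monotone_mono.
Qed.

Lemma gamma_restrict b v a rho : bsem b rho = v ->
  cl_le (gamma a rho) (gamma (restrict b v a) rho).
Proof.
move=> brho.
pose phi r := if bsem b r == v then gamma a r else cl_bot Om.
have : ple phi (gamma (restrict b v a)).
  apply/galois; apply: meet_glb.
    by apply/galois => r; rewrite /phi; case: eqP => _; [apply: cl_le_refl | apply: bot_le].
  apply: (alpha_mono galois) => r; rewrite /phi /grd.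
  by case: eqP => _; [apply: le_top | apply: cl_le_refl].
by move/(_ rho); rewrite /phi brho eqxx.
Qed.

Hypothesis o_unit : forall w, o (wret w) = w.
Hypothesis o_mult : forall m : W (W Om), o (wbind (fun t => t) m) = o (fmap o m).
Hypothesis o_sup : forall c : nat -> W Om, (forall n, wle (c n) (c n.+1)) ->
  o (wsup c) = cl_inf (fun w => exists n, w = o (c n)).
Hypothesis o_bot : o (wbot Om) = cl_top Om.

Definition loop_step b (body : memory V Var -> W (memory V Var))
  (f : memory V Var -> W (memory V Var)) rho : W (memory V Var) :=
  if bsem b rho then wbind f (body rho) else wret rho.

Lemma csem_Seq P1 P2 : csem (Seq P1 P2) = fun rho => wbind (csem P2) (csem P1 rho).
Proof. by []. Qed.

Lemma csem_While b P : csem (While b P) = klfp (loop_step b (csem P)).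
Proof. by []. Qed.

Lemma loop_step_mono b body (f g : memory V Var -> W (memory V Var)) :
  (forall rho, wle (f rho) (g rho)) -> forall rho, wle (loop_step b body f rho) (loop_step b body g rho).
Proof. by move=> le_fg rho; rewrite /loop_step; case: bsem; [apply: wkl_mono_l | apply: wle_refl]. Qed.

Lemma wp_loop_step b body f (phi : memory V Var -> Om) rho :
  wp o (loop_step b body f) phi rho =
  if bsem b rho then wp o (fun r => wbind f (body r)) phi rho
  else wp o (fun r => wret r) phi rho.
Proof. by rewrite /wp /loop_step; case: bsem. Qed.

Lemma while_iter_sound b P :
  (forall a, ple (gamma a) (wp o (csem P) (gamma (sharp P a)))) ->
  forall n a, ple (gamma a)
    (wp o (kleene_iter (loop_step b (csem P)) n) (gamma (sharp (While b P) a))).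
Proof.
move=> body_sound; rewrite sharp_While.
have S_pre := lfp_monotone_prefix (@while_step_mono b (sharp P)).
elim=> [|n IHn] a rho; first by rewrite (wp_bot o_bot); apply: le_top.
rewrite /kleene_iter /= -/(kleene_iter _ n) wp_loop_step; case brho: (bsem b rho).
- rewrite (wp_kleisli o_mult (csem P)).
  apply: cl_le_trans (gamma_restrict a brho) _.
  apply: cl_le_trans (body_sound _ rho) _.
  apply: (wp_mono o_meet) => m; apply: cl_le_trans (IHn _ m) _.
  apply: (wp_mono o_meet) => m'; apply: (gamma_mono galois).
  by apply: cl_le_trans (S_pre a); apply: join_l.
- rewrite (wp_ret o_unit); apply: cl_le_trans (gamma_restrict a brho) _.
  by apply: (gamma_mono galois); apply: cl_le_trans (S_pre a); apply: join_r.
Qed.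

Lemma sharp_sound P a : ple (gamma a) (wp o (csem P) (gamma (sharp P a))).
Proof.
elim: P a => [|P1 IH1 P2 IH2|x e|b P1 IH1 P2 IH2|b P1 IH1] a.
- by move=> rho; rewrite (wp_ret o_unit); apply: cl_le_refl.
- move=> rho; rewrite csem_Seq (wp_kleisli o_mult); apply: cl_le_trans (IH1 a rho) _.
  exact: (wp_mono o_meet (csem P1) (IH2 (sharp P1 a)) rho).
- by apply/(sp_wp_adjoint o_meet); apply: galois_unit galois _.
- move=> rho; rewrite /wp /=; case brho: (bsem b rho).
    apply: cl_le_trans (gamma_restrict a brho) _; apply: cl_le_trans (IH1 _ rho) _.
    by apply: (wp_mono o_meet) => m; apply/(gamma_mono galois)/join_l.
  apply: cl_le_trans (gamma_restrict a brho) _; apply: cl_le_trans (IH2 _ rho) _.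
  by apply: (wp_mono o_meet) => m; apply/(gamma_mono galois)/join_r.
- rewrite csem_While.
  exact: (wp_klfp_lb (@loop_step_mono b (csem P1)) o_sup (while_iter_sound b IH1 ^~ a)).
Qed.

End AbstractSemantics.

Theorem mainTheorem6 (W : while_monad) (Om : complete_lattice)
  (o : wT W (cl_car Om) -> cl_car Om)
  (* o is an Eilenberg-Moore T-algebra *)
  (o_unit : forall w : cl_car Om, o (wret w) = w)
  (o_mult : forall m : wT W (wT W (cl_car Om)),
      o (wbind (fun t => t) m) = o (fmap o m))
  (* o is meet-preserving *)
  (o_meet : forall (Y : Type) (S : (Y -> cl_car Om) -> Prop) (t : wT W Y),
      o (fmap (pinf S) t) = cl_inf (fun w => exists phi, S phi /\ w = o (fmap phi t)))
  (* o maps sups of omega-chains to meets, and ⇑ to top *)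
  (o_sup : forall c : nat -> wT W (cl_car Om), (forall n, wle (c n) (c n.+1)) ->
      o (wsup c) = cl_inf (fun w => exists n, w = o (c n)))
  (o_bot : o (wbot (cl_car Om)) = cl_top Om)
  (V : Type) (Var : finType) (Expr BExpr : Type)
  (asg : Var -> Expr -> memory V Var -> wT W (memory V Var))
  (bsem : BExpr -> memory V Var -> bool)
  (A : complete_lattice)
  (alpha : (memory V Var -> cl_car Om) -> cl_car A)
  (gamma : cl_car A -> (memory V Var -> cl_car Om))
  (galois : forall phi a, cl_le (alpha phi) a <-> ple phi (gamma a)) :
  let sharp := asem o asg bsem alpha gamma in
  (* [[-]]^# is a functor L_w -> Pos *)
  ((forall P : prog Var Expr BExpr, cl_monotone (sharp P))
   /\ sharp Skip = (fun a => a)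
   /\ (forall P P' : prog Var Expr BExpr, sharp (Seq P P') = (fun a => sharp P' (sharp P a))))
  /\
  (* soundness: alpha ∘ [[P]]^c ∘ gamma <= [[P]]^# pointwise *)
  (forall (P : prog Var Expr BExpr) (a : cl_car A),
      cl_le (alpha (sp o (csem asg bsem P) (gamma a))) (sharp P a)).
Proof.
move=> sharp; split.
  by split; [exact: sharp_mono galois o_meet | split].
move=> P a; apply/galois/(sp_wp_adjoint o_meet).
exact: sharp_sound.
Qed.
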